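(* Let $a<b<c$ be elements of $\mathcal{C}_n$ and let $k$ be an integer with $n-c\le k\le n-b-1$. Then the layer $\mathcal{L}^{k}_{c}\left(\triangle^{(n)}\{a,b,c\}\right)=\{a_ib_{n-k-i}c_k:\ 0\le i\le n-k\}$ is a subsemiring of $\triangle^{(n)}\{a,b,c\}$.
   Context: $\mathcal{C}_n=\{0,1,\dots,n-1\}$ with its usual order; $\widehat{\mathcal{E}}_{\mathcal{C}_n}$ is the set of all order-preserving maps $\mathcal{C}_n\to\mathcal{C}_n$ (not required to fix $0$), a semiring with $(\alpha+\beta)(x)=\max(\alpha(x),\beta(x))$ and $(\alpha\cdot\beta)(x)=\beta(\alpha(x))$. The notation $a_ib_\ell c_k$ (with $i+\ell+k=n$) denotes the map sending $0,\dots,i-1$ to $a$, the next $\ell$ elements to $b$ and the last $k$ elements to $c$. The triangle $\triangle^{(n)}\{a,b,c\}$ is the set of $\alpha\in\widehat{\mathcal{E}}_{\mathcal{C}_n}$ with image in $\{a,b,c\}$; the layer $\mathcal{L}^{k}_{c}$ is the set of elements of the triangle mapping exactly $k$ elements of $\mathcal{C}_n$ to $c$. *)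

From mathcomp Require Import all_boot.
Set Implicit Arguments. Unset Strict Implicit. Unset Printing Implicit Defensive.

(* Maps C_n -> C_n, with C_n = 'I_n = {0,...,n-1} ordered as naturals. *)
Definition map_n (n : nat) := {ffun 'I_n -> 'I_n}.

Definition ord_pres (n : nat) (f : map_n n) : Prop :=
  forall x y : 'I_n, x <= y -> f x <= f y.

Definition splus (n : nat) (f g : map_n n) : map_n n :=
  [ffun x => if f x <= g x then g x else f x].
Definition smul (n : nat) (f g : map_n n) : map_n n :=
  [ffun x => g (f x)].

Definition triangle (n : nat) (a b c : 'I_n) (f : map_n n) : Prop :=
  ord_pres f /\ forall x : 'I_n, f x \in [:: a; b; c].

Definition layer (n : nat) (a b c : 'I_n) (k : nat) (f : map_n n) : Prop :=
  triangle a b c f /\ #|[set x : 'I_n | f x == c]| = k.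

(* the map a_i b_l c_k (k = n - i - l) *)
Definition abc_map (n : nat) (a b c : 'I_n) (i l : nat) : map_n n :=
  [ffun x : 'I_n => if (x < i)%N then a else if (x < i + l)%N then b else c].

Definition subsemiring (n : nat) (S T : map_n n -> Prop) : Prop :=
  (forall f, S f -> T f) /\
  (forall f g, S f -> S g -> S (splus f g)) /\
  (forall f g, S f -> S g -> S (smul f g)).

From mathcomp Require Import all_boot zify.

(* An order-preserving map takes the values at most v on an initial segment of
   C_n, so a map of the triangle is a_i b_l c_m with i = #{f <= a} and
   i + l = #{f <= b}; membership in L^k_c says exactly that f^-1(c) is the
   final segment [n - k, n).  This condition is preserved by the pointwise
   maximum, and by the composite x |-> g (f x) because the bounds on k put a
   and b below n - k and c at or above it, so g sends c to c and a, b away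
   from c. *)

Lemma card_ord_ltn (n m : nat) : m <= n -> #|[set x : 'I_n | x < m]| = m.
Proof.
move=> le_mn.
have -> : [set x : 'I_n | x < m] = widen_ord le_mn @: [set: 'I_m].
  apply/setP => x; rewrite inE; apply/idP/imsetP => [lt_xm|[y _ ->]].
  - by exists (Ordinal lt_xm) => //; apply: val_inj.
  - by rewrite /= ltn_ord.
rewrite card_imset ?cardsT ?card_ord //.
by move=> u v /(congr1 val) /= /val_inj.
Qed.

Lemma downclosed_memE (n : nat) (D : {set 'I_n}) :
  (forall x y : 'I_n, x <= y -> y \in D -> x \in D) ->
  forall x : 'I_n, (x \in D) = (x < #|D|).
Proof.
move=> downD x; apply/idP/idP => [Dx | lt_x_D].
- have sub : [set y : 'I_n | y < x.+1] \subset D.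
    by apply/subsetP => y; rewrite inE ltnS => le_yx; apply: downD le_yx Dx.
  by have := subset_leq_card sub; rewrite card_ord_ltn.
- apply: contraLR lt_x_D => notDx; rewrite -leqNgt.
  have sub : D \subset [set y : 'I_n | y < x].
    apply/subsetP => y Dy; rewrite inE ltnNge; apply: contra notDx => le_xy.
    exact: downD le_xy Dy.
  by have := subset_leq_card sub; rewrite card_ord_ltn // ltnW.
Qed.

Lemma ord_pres_leE {n : nat} {f : map_n n} {v : nat} : ord_pres f ->
  forall x : 'I_n, (f x <= v) = (x < #|[set y : 'I_n | f y <= v]|).
Proof.
move=> fP x; rewrite -downclosed_memE ?inE // => y z le_yz.
by rewrite !inE => /(leq_trans (fP _ _ le_yz)).
Qed.

Lemma splus_val (n : nat) (f g : map_n n) (x : 'I_n) :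
  val (splus f g x) = maxn (f x) (g x).
Proof. by rewrite ffunE /maxn; case: ltngtP => // ->. Qed.

Lemma ord_pres_splus (n : nat) (f g : map_n n) :
  ord_pres f -> ord_pres g -> ord_pres (splus f g).
Proof.
move=> fP gP x y le_xy; rewrite !splus_val geq_max !leq_max.
by rewrite fP ?gP ?orbT.
Qed.

Lemma ord_pres_smul (n : nat) (f g : map_n n) :
  ord_pres f -> ord_pres g -> ord_pres (smul f g).
Proof. by move=> fP gP x y le_xy; rewrite !ffunE; apply/gP/fP. Qed.

Section Triangle.
Variables (n : nat) (a b c : 'I_n).
Hypotheses (lt_ab : a < b) (lt_bc : b < c).

Lemma triangle_valP {f : map_n n} (x : 'I_n) : triangle a b c f ->
  [\/ f x = a, f x = b | f x = c].
Proof. by case=> _ /(_ x); rewrite !inE => /or3P [] /eqP; constructor. Qed.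

Lemma triangle_eq_a {f : map_n n} (x : 'I_n) : triangle a b c f ->
  (f x == a) = (f x <= a).
Proof. by move/(triangle_valP x) => [] ->; rewrite -val_eqE /=; lia. Qed.

Lemma triangle_eq_c {f : map_n n} (x : 'I_n) : triangle a b c f ->
  (f x == c) = ~~ (f x <= b).
Proof. by move/(triangle_valP x) => [] ->; rewrite -val_eqE /=; lia. Qed.

Lemma triangle_splus (f g : map_n n) :
  triangle a b c f -> triangle a b c g -> triangle a b c (splus f g).
Proof.
move=> [fP f_abc] [gP g_abc]; split; first exact: ord_pres_splus.
by move=> x; rewrite ffunE; case: ifP.
Qed.

Lemma triangle_smul (f g : map_n n) :
  ord_pres f -> triangle a b c g -> triangle a b c (smul f g).
Proof.
move=> fP [gP g_abc]; split; first exact: ord_pres_smul.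
by move=> x; rewrite ffunE.
Qed.

Lemma abc_map_triangle (i l : nat) : triangle a b c (abc_map a b c i l).
Proof.
split=> [x y le_xy | x]; rewrite !ffunE; last first.
  by case: ifP => _; [|case: ifP => _]; rewrite !inE eqxx ?orbT.
by case: (x < i) / idP; case: (y < i) / idP; case: (x < i + l) / idP;
  case: (y < i + l) / idP; lia.
Qed.

Lemma abc_map_eq_c (i l : nat) (x : 'I_n) :
  (abc_map a b c i l x == c) = (i + l <= x).
Proof.
by rewrite ffunE; case: ifP => ?; [|case: ifP => ?]; rewrite -val_eqE /=; lia.
Qed.

Section Layer.
Variable k : nat.
Hypothesis le_kn : k <= n.

Lemma layerP (f : map_n n) : layer a b c k f <->
  triangle a b c f /\ forall x : 'I_n, (f x == c) = (n - k <= x).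
Proof.
split=> [[fT card_c] | [fT c_final]]; split=> //.
- have card_le_b : #|[set y : 'I_n | f y <= b]| = n - k.
    have -> : [set y : 'I_n | f y <= b] = ~: [set y | f y == c].
      by apply/setP => y; rewrite !inE triangle_eq_c ?negbK.
    by rewrite cardsCs setCK card_c card_ord.
  move=> x; rewrite triangle_eq_c // (ord_pres_leE fT.1) card_le_b.
  by rewrite -leqNgt.
- have -> : [set x : 'I_n | f x == c] = ~: [set x : 'I_n | x < n - k].
    by apply/setP => x; rewrite !inE c_final leqNgt.
  by rewrite cardsCs setCK card_ord card_ord_ltn ?leq_subr // subKn.
Qed.

Lemma layer_abc_map (i : nat) : i <= n - k ->
  layer a b c k (abc_map a b c i (n - k - i)).
Proof.
move=> le_i; apply/layerP; split; first exact: abc_map_triangle.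
by move=> x; rewrite abc_map_eq_c subnKC.
Qed.

Lemma layer_abc_mapP (f : map_n n) : layer a b c k f ->
  exists2 i : nat, i <= n - k & f = abc_map a b c i (n - k - i).
Proof.
move=> /layerP [fT c_final]; set i := #|[set y : 'I_n | f y <= a]|.
have a_init x : (f x == a) = (x < i) by rewrite triangle_eq_a // (ord_pres_leE fT.1).
have le_i : i <= n - k.
  rewrite -(@card_ord_ltn n _ (leq_subr k n)); apply: subset_leq_card.
  apply/subsetP => x; rewrite !inE -triangle_eq_a // ltnNge -c_final.
  by move/eqP ->; rewrite -val_eqE /= neq_ltn (ltn_trans lt_ab).
have [ne_ba ne_bc ne_ca] : [/\ b != a, b != c & c != a].
  by rewrite -!val_eqE /=; split; lia.
exists i => //; apply/ffunP => x; rewrite ffunE subnKC // -a_init ltnNge -c_final.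
by case: (triangle_valP x fT) => ->;
  rewrite ?eqxx ?(negbTE ne_ba) ?(negbTE ne_bc) ?(negbTE ne_ca).
Qed.

Lemma layer_splus (f g : map_n n) :
  layer a b c k f -> layer a b c k g -> layer a b c k (splus f g).
Proof.
move=> /layerP [fT f_c] /layerP [gT g_c]; apply/layerP.
split=> [|x]; first exact: triangle_splus.
by rewrite ffunE; case: ifP.
Qed.

Hypotheses (le_c : n - c <= k) (lt_b : k <= n - b - 1).

Lemma layer_smul (f g : map_n n) :
  layer a b c k f -> layer a b c k g -> layer a b c k (smul f g).
Proof.
move=> /layerP [fT f_c] /layerP [gT g_c]; apply/layerP.
split=> [|x]; first exact: triangle_smul fT.1 gT.
rewrite ffunE g_c -[n - k <= x]f_c.
have := ltn_ord c.
by case: (triangle_valP x fT) => ->; rewrite -val_eqE /=; case: eqP; lia.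
Qed.

End Layer.
End Triangle.

Theorem proposition29 (n : nat) (a b c : 'I_n) (k : nat) :
  a < b -> b < c -> n - c <= k -> k <= n - b - 1 ->
  (forall f : map_n n,
     layer a b c k f <-> exists2 i : nat, i <= n - k & f = abc_map a b c i (n - k - i)) /\
  subsemiring (layer a b c k) (triangle a b c).
Proof.
move=> lt_ab lt_bc le_c lt_b.
have le_kn : k <= n by lia.
split=> [f | ]; first split.
- exact: layer_abc_mapP.
- by case=> i le_i ->; apply: layer_abc_map.
split; first by move=> f [].
by split; [exact: layer_splus | exact: layer_smul].
Qed.
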